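(* Let $q\geq 1$ be a constant, let $(X,d)$ be a finite metric space and $k$ an integer with $2\le k\le |X|$ (with $k$ even when considering remote-bipartition). For each diversity function $\mathrm{div}^q\in\{\mathrm{cl}^q,\mathrm{st}^q,\mathrm{bp}^q\}$ and each fixed optimal $k$-set $\mathrm{OPT}_{\mathrm{div}^q}\subseteq X$, there is a point $z_0\in \mathrm{OPT}_{\mathrm{div}^q}$ such that \[ X\setminus B\big(z_0, c_{\mathrm{div}^q}(\Delta_{\mathrm{div}^q})^{1/q}\big)\subseteq \mathrm{OPT}_{\mathrm{div}^q},\] where $c_{\mathrm{cl}^q}=2$, $c_{\mathrm{st}^q}=4$ and $c_{\mathrm{bp}^q}=6$.
   Context: For $T\subseteq X$ with $|T|=k$: $\mathrm{cl}^q(T)=\sum_{\{u,v\}\subseteq T} d^q(u,v)$; $\mathrm{st}^q(T)=\min_{z\in T}\sum_{u\in T\setminus\{z\}} d^q(z,u)$; $\mathrm{bp}^q(T)=\min_{L\subseteq T,|L|=|T|/2}\sum_{\ell\in L,r\in T\setminus L} d^q(\ell,r)$, where $d^q=d(\cdot,\cdot)^q$. An optimal $k$-set $\mathrm{OPT}_{\mathrm{div}^q}$ is a $k$-subset of $X$ maximizing $\mathrm{div}^q$. The average optimal values are $\Delta_{\mathrm{cl}^q}=\mathrm{cl}^q(\mathrm{OPT}_{\mathrm{cl}^q})/\binom{k}{2}$, $\Delta_{\mathrm{st}^q}=\mathrm{st}^q(\mathrm{OPT}_{\mathrm{st}^q})/(k-1)$, $\Delta_{\mathrm{bp}^q}=\mathrm{bp}^q(\mathrm{OPT}_{\mathrm{bp}^q})/(k^2/4)$.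 $B(u,r)=\{v\in X: d(u,v)\le r\}$. *)

From HB Require Import structures.
From mathcomp Require Import all_boot all_order all_algebra.
From mathcomp Require Import reals exp.
Set Implicit Arguments. Unset Strict Implicit. Unset Printing Implicit Defensive.
Import Order.TTheory GRing.Theory Num.Theory.
Local Open Scope ring_scope.

Section Diversity.
Variables (R : realType) (X : finType) (d : X -> X -> R) (q : R).

Definition is_metric : Prop :=
  [/\ forall x y, 0 <= d x y,
      forall x y, d x y = 0 <-> x = y,
      forall x y, d x y = d y x &
      forall x y z, d x z <= d x y + d y z].

Definition dq (u v : X) : R := powR (d u v) q.

(* remote-clique: sum over unordered pairs {u,v} ⊆ T (u <> v); each
   unordered pair is counted twice in the ordered double sum *)
Definition cl (T : {set X}) : R :=
  (\sum_(u in T) \sum_(v in T | v != u) dq u v) / 2.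

Definition st_val (T : {set X}) (z : X) : R := \sum_(u in T :\ z) dq z u.
Definition st (T : {set X}) : R :=
  match [pick z in T] with
  | Some z0 => \big[Num.min/st_val T z0]_(z in T) st_val T z
  | None => 0
  end.

Definition bp_val (T L : {set X}) : R :=
  \sum_(l in L) \sum_(r in T :\: L) dq l r.
Definition bp (T : {set X}) : R :=
  match [pick L in powerset T | #|L| == #|T|./2] with
  | Some L0 => \big[Num.min/bp_val T L0]_(L in powerset T | #|L| == #|T|./2) bp_val T L
  | None => 0
  end.

End Diversity.

Inductive divkind := Clique | Star | Bipartition.

Definition div (R : realType) (X : finType) (d : X -> X -> R) (q : R)
    (K : divkind) (T : {set X}) : R :=
  match K with
  | Clique => cl d q T
  | Star => st d q T
  | Bipartition => bp d q T
  end.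

Definition div_norm (R : realType) (K : divkind) (k : nat) : R :=
  match K with
  | Clique => ('C(k, 2))%:R
  | Star => (k.-1)%:R
  | Bipartition => (k%:R) ^+ 2 / 4
  end.

Definition div_const (R : realType) (K : divkind) : R :=
  match K with
  | Clique => 2
  | Star => 4
  | Bipartition => 6
  end.

Definition optimal_kset (R : realType) (X : finType) (d : X -> X -> R) (q : R)
    (K : divkind) (k : nat) (OPT : {set X}) : Prop :=
  #|OPT| = k /\ forall S : {set X}, #|S| = k -> div d q K S <= div d q K OPT.

Definition Delta (R : realType) (X : finType) (d : X -> X -> R) (q : R)
    (K : divkind) (k : nat) (OPT : {set X}) : R :=
  div d q K OPT / div_norm R K k.

Definition ball (R : realType) (X : finType) (d : X -> X -> R) (u : X) (r : R)
  : {set X} := [set v | d u v <= r].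

From Pilot Require Import Defs.
From HB Require Import structures.
From mathcomp Require Import all_boot all_order all_algebra.
From mathcomp Require Import reals exp.
From mathcomp Require Import interval_inference convex hoelder.
From mathcomp Require Import zify ring lra.
Set Implicit Arguments. Unset Strict Implicit. Unset Printing Implicit Defensive.
Import Order.TTheory GRing.Theory Num.Theory.
Local Open Scope ring_scope.

(* By convexity of t |-> t^q, d^q satisfies the relaxed triangle inequality
   d^q(x,z) <= 2^(q-1) (d^q(x,y) + d^q(y,z)); averaged over a set W it gives
   |W| d^q(x,y) <= 2^q sum_(w in W) d^q(x,w) whenever y is no farther from W
   than x in total. Let z0 in OPT minimise the distance sum to the rest of OPT
   (clique), be a star centre of OPT (star), or minimise, within the left half
   of an optimal bipartition, the distance sum to the right half (bipartition).
   For v outside OPT, optimality of OPT against OPT - z0 + v provides such a W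
   of size |OPT| - 1 or |OPT|/2, while the distance sum of z0 is at most a
   multiple of the average optimal value. For remote-star the centre of the
   swapped set may be another point z, costing a second triangle step through
   z (hence 4^q); for remote-bipartition, bounding the sum of z0 over all of
   OPT through its own half costs the factor 2^q + 1 <= 3^q (hence 6^q). *)

Lemma powR_midpoint_le (R : realType) (q a b : R) : 1 <= q -> 0 <= a -> 0 <= b ->
  powR ((a + b) / 2) q <= (powR a q + powR b q) / 2.
Proof.
move=> q1 a0 b0.
have half_ge0 : (0 : R) <= 2^-1 by rewrite invr_ge0.
have half_le1 : (2^-1 : R) <= 1 by rewrite invf_le1 ?ler1n.
have onem_half : unstable.onem (2^-1 : R) = 2^-1.
  by rewrite /unstable.onem {1}(splitr 1) div1r addrK.
have := convex_powR q1 (Itv01 half_ge0 half_le1) (x := a) (y := b).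
move=> /(_ (classical_sets.mem_set _) (classical_sets.mem_set _)) /=.
rewrite !in_itv /= !andbT => /(_ a0 b0).
rewrite convRE /= onem_half.
set mid := conv _ _ _.
have -> : mid = 2^-1 * (a + b) by rewrite /mid /conv /= onem_half mulrDr.
by rewrite -mulrDr ![_ / 2]mulrC.
Qed.

Lemma powRD_le (R : realType) (q a b : R) : 1 <= q -> 0 <= a -> 0 <= b ->
  powR (a + b) q <= powR 2 q / 2 * (powR a q + powR b q).
Proof.
move=> q1 a0 b0.
have -> : a + b = 2 * ((a + b) / 2) by field.
rewrite powRM ?divr_ge0 ?addr_ge0 // -mulrA ler_wpM2l ?powR_ge0 //.
by rewrite [X in _ <= X]mulrC powR_midpoint_le.
Qed.

Lemma le_mul_powR_inv (R : realType) (q x c D : R) :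
  0 < q -> 0 <= x -> 0 <= c -> 0 <= D ->
  powR x q <= powR c q * D -> x <= c * powR D q^-1.
Proof.
move=> q_gt0 x0 c0 D0 le_xq.
have powRK y : 0 <= y -> powR (powR y q) q^-1 = y.
  by move=> y0; rewrite -powRrM mulfV ?gt_eqF // powRr1.
rewrite -(powRK x x0) -(powRK c c0) -powRM ?powR_ge0 //.
by apply: ge0_ler_powR; rewrite ?nnegrE ?invr_ge0 ?(ltW q_gt0) ?mulr_ge0 ?powR_ge0.
Qed.

Lemma powR2D1_le_powR3 (R : realType) (q : R) : 1 <= q -> powR 2 q + 1 <= powR 3 q.
Proof.
move=> q_ge1; have q1_ge0 : 0 <= q - 1 by rewrite subr_ge0.
have powRS a : 0 < a -> powR a q = a * powR a (q - 1).
  move=> a_gt0; rewrite -{2}(powRr1 (ltW a_gt0)) -powRD ?(gt_eqF a_gt0) ?implybT //.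
  by rewrite addrC subrK.
have le23 : powR 2 (q - 1) <= powR 3 (q - 1).
  by apply: ge0_ler_powR; rewrite ?nnegrE ?ler_nat.
have ge1 : 1 <= powR 3 (q - 1) by rewrite -[leLHS](powRr0 3); apply: ler_powR; rewrite ?ler1n.
rewrite (powRS 2) // (powRS 3) //; lra.
Qed.

Lemma bigmin_attained disp (T : orderType disp) (I : finType) (P : pred I)
    (F : I -> T) i0 :
  P i0 -> exists2 i, P i & \big[Order.min/F i0]_(i | P i) F i = F i.
Proof.
move=> Pi0; case: (Order.TotalTheory.arg_minP F Pi0) => i Pi minFi; exists i => //.
apply/le_anti; rewrite bigmin_le_cond //=.
by apply/bigmin_geP; split; [exact: minFi | exact: minFi].
Qed.

Lemma setD1U1 (T : finType) (A : {set T}) x y :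
  x != y -> (x |: A) :\ y = x |: (A :\ y).
Proof.
by move=> xy; apply/setP => w; rewrite !inE; case: (eqVneq w x) => // ->; rewrite xy.
Qed.

Lemma setU1D (T : finType) (A B : {set T}) x :
  x \notin A -> (x |: A) :\: (x |: B) = A :\: B.
Proof.
move=> xA; apply/setP => w; rewrite !inE.
by case: eqVneq => // ->; rewrite (negbTE xA) andbF.
Qed.

Section MetricDiversity.
Variables (R : realType) (X : finType) (d : X -> X -> R) (q : R).
Hypotheses (d_metric : is_metric d) (q_ge1 : 1 <= q).

Implicit Types (A B L T W : {set X}) (v x y z : X).

Local Notation dq := (dq d q).

Definition dq_sum (W : {set X}) (x : X) : R := \sum_(w in W) dq x w.

Lemma dq_ge0 x y : 0 <= dq x y. Proof. exact: powR_ge0. Qed.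

Lemma dq_sym x y : dq x y = dq y x.
Proof. by case: d_metric => _ _ d_sym _; rewrite /Defs.dq d_sym. Qed.

Lemma dq_sum_ge0 W x : 0 <= dq_sum W x.
Proof. by apply: sumr_ge0 => w _; exact: dq_ge0. Qed.

Lemma dq_sum_subset A B x : A \subset B -> dq_sum A x <= dq_sum B x.
Proof.
move=> AB; rewrite /dq_sum [X in _ <= X](big_setID A) /= (setIidPr AB) lerDl.
by apply: sumr_ge0 => w _; exact: dq_ge0.
Qed.

Lemma powR2_ge2 : 2 <= powR 2 q.
Proof. by rewrite -[X in X <= _]powRr1 //; apply: ler_powR; rewrite ?ler1n. Qed.

Lemma dq_triangle x y z : dq x z <= powR 2 q / 2 * (dq x y + dq y z).
Proof.
case: d_metric => d_ge0 _ _ d_tri.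
rewrite /Defs.dq; apply: le_trans _ (powRD_le q_ge1 (d_ge0 x y) (d_ge0 y z)).
by apply: ge0_ler_powR; rewrite ?nnegrE ?addr_ge0 ?d_tri ?(le_trans _ q_ge1).
Qed.

Lemma card_mul_dq_le W x y :
  #|W|%:R * dq x y <= powR 2 q / 2 * (dq_sum W x + dq_sum W y).
Proof.
rewrite -sum1_card natr_sum mulr_suml /dq_sum -big_split mulr_sumr /=.
by apply: ler_sum => w _; rewrite mul1r [dq y w]dq_sym dq_triangle.
Qed.

Lemma card_mul_dq_le_dq_sum W x y : dq_sum W y <= dq_sum W x ->
  #|W|%:R * dq x y <= powR 2 q * dq_sum W x.
Proof.
move=> le_yx; apply: le_trans (card_mul_dq_le W x y) _.
have K0 : 0 <= powR 2 q / 2 by rewrite divr_ge0 ?powR_ge0.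
apply: le_trans (ler_wpM2l K0 (lerD (lexx _) le_yx)) _.
suff -> : powR 2 q / 2 * (dq_sum W x + dq_sum W x) = powR 2 q * dq_sum W x by [].
by field.
Qed.

Lemma card_mul_dq_le_dq_sumU1 W x z : z \notin W ->
  dq_sum W z <= dq_sum (z |: W) x ->
  #|z |: W|%:R * dq x z <= powR 2 q * dq_sum (z |: W) x.
Proof.
move=> zW; rewrite /dq_sum big_setU1 //= cardsU1 zW natrD mulrDl mul1r -/(dq_sum W x).
move=> le_zx; have := card_mul_dq_le W x z.
have := powR2_ge2; have := dq_ge0 x z.
set a := dq x z; set K := powR 2 q => a0 K2 le_a.
have : (2 : R)^-1 * K * (dq_sum W z) <= 2^-1 * K * (a + dq_sum W x).
  by rewrite ler_wpM2l ?mulr_ge0 ?invr_ge0 ?powR_ge0.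
have : 2 * a <= K * a by rewrite ler_wpM2r.
nra.
Qed.

Lemma setC_ball_subset T z0 c D : 0 <= c -> 0 <= D ->
  (forall v, v \notin T -> dq z0 v <= powR c q * D) ->
  ~: ball d z0 (c * powR D q^-1) \subset T.
Proof.
move=> c_ge0 D_ge0 le_dq; apply/subsetP => v; rewrite inE /ball inE.
apply: contraNT => vT; apply: le_mul_powR_inv (le_dq v vT) => //.
  exact: lt_le_trans q_ge1.
by case: d_metric.
Qed.

Lemma card_swap T z v : z \in T -> v \notin T -> #|v |: (T :\ z)| = #|T|.
Proof.
move=> zT vT; rewrite cardsU1 in_setD1 (negbTE vT) andbF (cardsD1 z T) zT.
by rewrite addnC.
Qed.

Lemma clE T : cl d q T = (\sum_(u in T) dq_sum (T :\ u) u) / 2.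
Proof.
congr (_ / 2); apply: eq_bigr => u _.
by apply: eq_bigl => w; rewrite in_setD1 andbC.
Qed.

Lemma sum_dq_sumD1 T x : x \in T ->
  \sum_(u in T) dq_sum (T :\ u) u =
  \sum_(u in T :\ x) dq_sum (T :\ x :\ u) u + 2 * dq_sum (T :\ x) x.
Proof.
move=> xT; rewrite (big_setD1 x xT) /= mulr_natl mulr2n addrA addrC; congr (_ + _).
rewrite [X in _ + X]/dq_sum -big_split /=; apply: eq_bigr => u.
rewrite in_setD1 => /andP[ux uT].
rewrite /dq_sum (big_setD1 x) ?in_setD1 ?xT ?andbT 1?eq_sym //= dq_sym addrC.
by rewrite !setDDl setUC.
Qed.

Lemma div_ge0 K T : 0 <= div d q K T.
Proof.
case: K => /=.
- by rewrite clE divr_ge0 // sumr_ge0 // => u _; exact: dq_sum_ge0.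
- rewrite /st; case: pickP => // z0 _.
  by apply/bigmin_geP; split => [|z _]; exact: dq_sum_ge0.
- rewrite /bp; case: pickP => // L0 _.
  by apply/bigmin_geP; split => [|L _]; apply: sumr_ge0 => l _; exact: dq_sum_ge0.
Qed.

Lemma Delta_ge0 K k T : 0 <= Delta d q K k T.
Proof. by rewrite divr_ge0 ?div_ge0 //; case: K => //=; rewrite divr_ge0 ?sqr_ge0. Qed.

Lemma clique_dq_le k OPT : (2 <= k)%N -> optimal_kset d q Clique k OPT ->
  exists2 z0, z0 \in OPT &
    forall v, v \notin OPT -> dq z0 v <= powR 2 q * Delta d q Clique k OPT.
Proof.
move=> k_ge2 [cardO optO]; set D := Delta d q Clique k OPT.
have [z1 z1O] : exists z1, z1 \in OPT by apply/card_gt0P; rewrite cardO; lia.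
have [z0 /= z0O min_z0] :=
  Order.TotalTheory.arg_minP (P := [in OPT]) (fun u => dq_sum (OPT :\ u) u) z1O.
exists z0 => // v vO.
have cardOD1 : #|OPT :\ z0| = k.-1 by rewrite -cardO (cardsD1 z0 OPT) z0O.
have sumE : \sum_(u in OPT) dq_sum (OPT :\ u) u = (k * k.-1)%:R * D.
  have binE : (k * k.-1 = 'C(k, 2) * 2)%N by rewrite -(bin1 k.-1) mul_bin_diag mulnC.
  rewrite /D /Delta /= clE binE natrM; field.
  by rewrite pnatr_eq0 -lt0n bin_gt0.
have le_z0 : dq_sum (OPT :\ z0) z0 <= k.-1%:R * D.
  rewrite -(@ler_pM2l _ k%:R) ?ltr0n; last by lia.
  rewrite mulrA -natrM -sumE -cardO -sum1_card natr_sum mulr_suml.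
  by apply: ler_sum => u uO; rewrite mul1r min_z0.
have le_v : dq_sum (OPT :\ z0) v <= dq_sum (OPT :\ z0) z0.
  have := optO _ (etrans (card_swap z0O vO) cardO); rewrite /= !clE.
  rewrite (sum_dq_sumD1 (setU11 v _)) (sum_dq_sumD1 z0O).
  by rewrite setU1K ?in_setD1 ?(negbTE vO) ?andbF //; lra.
have := card_mul_dq_le_dq_sum le_v; rewrite cardOD1 => le_dq.
rewrite -(@ler_pM2l _ k.-1%:R) ?ltr0n; last by lia.
by apply: le_trans le_dq _; rewrite mulrCA ler_wpM2l ?powR_ge0.
Qed.

Lemma st_attained T z1 : z1 \in T ->
  exists2 z, z \in T & st d q T = dq_sum (T :\ z) z.
Proof.
move=> z1T; rewrite /st; case: pickP => [z0 z0T | /(_ z1)]; last by rewrite z1T.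
exact: bigmin_attained.
Qed.

Lemma st_le T z : z \in T -> st d q T <= dq_sum (T :\ z) z.
Proof.
move=> zT; rewrite /st; case: pickP => [z0 _ | /(_ z)]; last by rewrite zT.
exact: bigmin_le_cond.
Qed.

Lemma card_mul_dq_le_star T z0 z v :
  z0 \in T -> z \in T :\ z0 -> v \notin T ->
  st d q T = dq_sum (T :\ z0) z0 ->
  dq_sum ((v |: (T :\ z0)) :\ z) z <= st d q T ->
  #|T :\ z0|%:R * dq z0 v <= powR 2 q * powR 2 q * st d q T.
Proof.
move=> z0T zTD1 vT stT le_swap.
have [zz0 zT] : z != z0 /\ z \in T by apply/andP; rewrite -in_setD1.
have zv : z != v by apply: contraNneq vT => <-.
set W := T :\ z0 :\ z.
have zW : z \notin W by rewrite !inE eqxx.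
have TD1E : T :\ z0 = z |: W by rewrite setD1K.
have TzE : T :\ z = z0 |: W by rewrite -{1}(setD1K z0T) setD1U1 1?eq_sym.
have le_z := st_le zT.
rewrite TzE /dq_sum big_setU1 ?inE ?eqxx ?andbF //= -/(dq_sum W z) dq_sym in le_z.
rewrite setD1U1 1?eq_sym // /dq_sum big_setU1 ?inE ?eqxx ?(negbTE vT) ?andbF //= in le_swap.
rewrite -/(dq_sum W z) in le_swap.
have le_ba : dq z v <= dq z0 z by lra.
have le_a : #|T :\ z0|%:R * dq z0 z <= powR 2 q * st d q T.
  rewrite stT TD1E; apply: card_mul_dq_le_dq_sumU1 => //.
  by rewrite -TD1E -stT; have := dq_ge0 z v; lra.
have le_dq : dq z0 v <= powR 2 q * dq z0 z.
  by apply: le_trans (dq_triangle z0 z v) _; have := powR_ge0 2 q; nra.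
apply: le_trans (ler_wpM2l (ler0n _ _) le_dq) _.
by rewrite mulrCA -mulrA ler_wpM2l ?powR_ge0.
Qed.

Lemma star_dq_le k OPT : (2 <= k)%N -> optimal_kset d q Star k OPT ->
  exists2 z0, z0 \in OPT &
    forall v, v \notin OPT -> dq z0 v <= powR 4 q * Delta d q Star k OPT.
Proof.
move=> k_ge2 [cardO optO]; set D := Delta d q Star k OPT.
have [z1 z1O] : exists z1, z1 \in OPT by apply/card_gt0P; rewrite cardO; lia.
have [z0 z0O stO] := st_attained z1O.
exists z0 => // v vO.
have cardOD1 : #|OPT :\ z0| = k.-1 by rewrite -cardO (cardsD1 z0 OPT) z0O.
have k1_gt0 : (0 : R) < k.-1%:R by rewrite ltr0n; lia.
have stE : st d q OPT = k.-1%:R * D by rewrite /D /Delta /=; field; rewrite gt_eqF.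
have [z zS stS] := st_attained (setU11 v (OPT :\ z0)).
have le_stS := optO _ (etrans (card_swap z0O vO) cardO); rewrite /= stS in le_stS.
have key : k.-1%:R * dq z0 v <= powR 2 q * powR 2 q * st d q OPT.
  have [zv | zv] := eqVneq z v.
    rewrite zv setU1K ?in_setD1 ?(negbTE vO) ?andbF // stO in le_stS.
    have := card_mul_dq_le_dq_sum le_stS; rewrite cardOD1 -stO => /le_trans; apply.
    rewrite -mulrA; apply: ler_peMl; first exact: mulr_ge0 (powR_ge0 _ _) (div_ge0 Star OPT).
    by have := powR2_ge2; lra.
  rewrite -cardOD1; apply: (card_mul_dq_le_star (z := z)) => //.
  by move: zS; rewrite in_setU1 (negbTE zv).
rewrite -(ler_pM2l k1_gt0); apply: le_trans key _.
by rewrite stE -powRM // -natrM mulrCA.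
Qed.

Lemma bp_le T L : L \subset T -> #|L| = #|T|./2 -> bp d q T <= bp_val d q T L.
Proof.
move=> LT cardL; have PL : (L \in powerset T) && (#|L| == #|T|./2).
  by rewrite powersetE LT cardL eqxx.
by rewrite /bp; case: pickP => [L0 _ | /(_ L)]; [exact: bigmin_le_cond | rewrite PL].
Qed.

Lemma bp_attained T :
  exists L, [/\ L \subset T, #|L| = #|T|./2 & bp d q T = bp_val d q T L].
Proof.
have [L1 L1T /eqP cardL1] : exists2 L : {set X}, L \subset T & #|L| == #|T|./2.
  have : (0 < #|[set L : {set X} | L \subset T & #|L| == #|T|./2]|)%N.
    by rewrite cards_draws bin_gt0 -divn2 leq_div.
  by case/card_gt0P => L; rewrite inE => /andP[LT cardL]; exists L.
rewrite /bp; case: pickP => [L0 L0P | /(_ L1)]; last by rewrite powersetE L1T cardL1 eqxx.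
have [L] := bigmin_attained
  (P := fun L => (L \in powerset T) && (#|L| == #|T|./2)) (bp_val d q T) L0P.
by rewrite powersetE => /andP[LT /eqP cardL] ->; exists L.
Qed.

Lemma bp_val_setDC T L : L \subset T -> bp_val d q T (T :\: L) = bp_val d q T L.
Proof.
move=> LT; rewrite /bp_val setDDr setDv set0U (setIidPr LT) exchange_big /=.
by apply: eq_bigr => l _; apply: eq_bigr => r _; exact: dq_sym.
Qed.

Lemma bp_attained_mem T x : x \in T -> ~~ odd #|T| ->
  exists L, [/\ L \subset T, #|L| = #|T|./2, x \in L & bp d q T = bp_val d q T L].
Proof.
move=> xT evenT; have [L [LT cardL bpE]] := bp_attained T.
have [xL | xNL] := boolP (x \in L); first by exists L.
exists (T :\: L); split; rewrite ?subsetDl ?inE ?xNL ?bp_val_setDC //.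
by rewrite cardsDS // cardL -{1}(even_halfK evenT) -addnn addnK.
Qed.

Lemma bp_val_setU1 T L x : L \subset T -> x \notin T ->
  bp_val d q (x |: T) (x |: L) = dq_sum (T :\: L) x + bp_val d q T L.
Proof.
move=> LT xT; have xL : x \notin L by apply: contraNN xT; apply: subsetP.
by rewrite /bp_val setU1D // big_setU1.
Qed.

Lemma card_mul_dq_sum_le_bp_val T L z0 :
  L \subset T -> #|T :\: L| = #|L| -> z0 \in L ->
  (forall l, l \in L -> dq_sum (T :\: L) z0 <= dq_sum (T :\: L) l) ->
  #|L|%:R * dq_sum T z0 <= (powR 2 q + 1) * bp_val d q T L.
Proof.
move=> LT cardRs z0L min_z0; set Rs := T :\: L; set P := bp_val d q T L.
have K0 : 0 <= powR 2 q / 2 by rewrite divr_ge0 ?powR_ge0.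
have le_row : #|L|%:R * dq_sum Rs z0 <= P.
  rewrite -sum1_card natr_sum mulr_suml.
  by apply: ler_sum => l lL; rewrite mul1r min_z0.
have le_col : #|L|%:R * dq_sum L z0 <= powR 2 q / 2 * (#|L|%:R * dq_sum Rs z0 + P).
  rewrite /dq_sum mulr_sumr.
  apply: le_trans (_ : _ <= \sum_(l in L) powR 2 q / 2 * (dq_sum Rs z0 + dq_sum Rs l)) _.
    by apply: ler_sum => l _; rewrite -cardRs card_mul_dq_le.
  by rewrite -mulr_sumr big_split /= sumr_const -[_ *+ #|L|]mulr_natl.
have splitT : dq_sum T z0 = dq_sum L z0 + dq_sum Rs z0.
  by rewrite /dq_sum (big_setID L) /= (setIidPr LT).
have : powR 2 q / 2 * (#|L|%:R * dq_sum Rs z0 + P) <= powR 2 q / 2 * (2 * P).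
  by rewrite ler_wpM2l //; lra.
rewrite splitT; lra.
Qed.

(* An optimal bipartition of the swapped set may be taken with v on the left;
   putting z0 in place of v gives a bipartition of T with the same right part
   W, and the two costs differ only by the cross sums of v and z0 to W. *)
Lemma bp_swap_witness T z0 v : z0 \in T -> v \notin T -> ~~ odd #|T| ->
  bp d q (v |: (T :\ z0)) <= bp d q T ->
  exists W, [/\ W \subset T, #|W| = #|T|./2 & dq_sum W v <= dq_sum W z0].
Proof.
move=> z0T vT evenT le_bp; set T0 := T :\ z0.
have z0T0 : z0 \notin T0 by rewrite !inE eqxx.
have vT0 : v \notin T0 by rewrite !inE (negbTE vT) andbF.
have cardS : #|v |: T0| = #|T| := card_swap z0T vT.
have evenS : ~~ odd #|v |: T0| by rewrite cardS.
have [Lv [LvS cardLv vLv bpS]] := bp_attained_mem (setU11 v T0) evenS.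
rewrite cardS in cardLv; set A := Lv :\ v.
have AT0 : A \subset T0 by rewrite -(setU1K vT0) setSD.
have z0A : z0 \notin A by apply: contraNN z0T0; apply: subsetP.
have L'T : z0 |: A \subset T by rewrite -(setD1K z0T) setUS.
have cardL' : #|z0 |: A| = #|T|./2.
  by rewrite cardsU1 z0A -cardLv (cardsD1 v Lv) vLv.
exists (T0 :\: A); split.
- exact: subset_trans (subsetDl _ _) (subD1set _ _).
- rewrite -(setU1D _ vT0) -/A setD1K // cardsDS // cardS cardLv.
  by rewrite -{1}(even_halfK evenT) -addnn addnK.
- have := le_trans le_bp (bp_le L'T cardL'); rewrite bpS.
  by rewrite -(setD1K vLv) -{1}(setD1K z0T) !bp_val_setU1 // lerD2r.
Qed.

Lemma bipartition_dq_le k OPT : (2 <= k)%N -> ~~ odd k ->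
  optimal_kset d q Bipartition k OPT ->
  exists2 z0, z0 \in OPT &
    forall v, v \notin OPT -> dq z0 v <= powR 6 q * Delta d q Bipartition k OPT.
Proof.
move=> k_ge2 k_even [cardO optO]; set D := Delta d q Bipartition k OPT.
set m := k./2; have km : k = (m + m)%N by rewrite addnn even_halfK.
have m_gt0 : (0 < m)%N by lia.
have mR_gt0 : (0 : R) < m%:R by rewrite ltr0n.
have [Ls [LsO cardLs bpO]] := bp_attained OPT; rewrite cardO -/m in cardLs.
set Rs := OPT :\: Ls.
have cardRs : #|Rs| = m by rewrite cardsDS // cardO cardLs {1}km addnK.
have [l1 l1Ls] : exists l, l \in Ls by apply/card_gt0P; rewrite cardLs.
have [z0 /= z0Ls min_z0] := Order.TotalTheory.arg_minP (P := [in Ls]) (dq_sum Rs) l1Ls.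
have z0O : z0 \in OPT := subsetP LsO z0 z0Ls.
exists z0 => // v vO.
have bpE : bp d q OPT = m%:R * m%:R * D.
  by rewrite /D /Delta /= {1}km natrD; field; rewrite gt_eqF ?addr_gt0.
have le_rowO : m%:R * dq_sum OPT z0 <= (powR 2 q + 1) * bp d q OPT.
  by rewrite bpO -cardLs card_mul_dq_sum_le_bp_val // cardRs cardLs.
have evenO : ~~ odd #|OPT| by rewrite cardO.
have le_bp := optO _ (etrans (card_swap z0O vO) cardO).
have [W [WO cardW le_v]] := bp_swap_witness z0O vO evenO le_bp.
have := card_mul_dq_le_dq_sum le_v; rewrite cardW cardO -/m => le_dq.
have pow6E : powR 6 q = powR 2 q * powR 3 q by rewrite -powRM // -natrM.
apply: le_trans (_ : _ <= powR 2 q * (powR 2 q + 1) * D) _; last first.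
  by rewrite ler_wpM2r ?Delta_ge0 // pow6E ler_wpM2l ?powR_ge0 ?powR2D1_le_powR3.
rewrite -(@ler_pM2l _ (m%:R * m%:R)) ?mulr_gt0 // -mulrA.
apply: le_trans (ler_wpM2l (ltW mR_gt0) le_dq) _; rewrite mulrCA.
have le_W := ler_wpM2l (ltW mR_gt0) (dq_sum_subset z0 WO).
apply: le_trans (ler_wpM2l (powR_ge0 2 q) le_W) _.
apply: le_trans (ler_wpM2l (powR_ge0 2 q) le_rowO) _.
by rewrite bpE; lra.
Qed.

End MetricDiversity.

Theorem theorem7 (R : realType) (X : finType) (d : X -> X -> R) (q : R)
  (k : nat) (K : divkind) (OPT : {set X}) :
  is_metric d -> 1 <= q -> (2 <= k <= #|X|)%N ->
  (K = Bipartition -> ~~ odd k) ->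
  optimal_kset d q K k OPT ->
  exists2 z0, z0 \in OPT &
    ~: ball d z0 (div_const R K * powR (Delta d q K k OPT) q^-1) \subset OPT.
Proof.
move=> d_metric q_ge1 /andP[k_ge2 _] bp_even optO.
have D_ge0 : 0 <= Delta d q K k OPT by exact: Delta_ge0.
have c_ge0 : 0 <= div_const R K by case: K {bp_even optO D_ge0}.
have [z0 z0O le_dq] : exists2 z0, z0 \in OPT & forall v, v \notin OPT ->
    dq d q z0 v <= powR (div_const R K) q * Delta d q K k OPT.
  case: K bp_even optO {D_ge0 c_ge0} => [_ | _ | /(_ erefl) k_even] optO.
  - exact: clique_dq_le.
  - exact: star_dq_le.
  - exact: bipartition_dq_le.
by exists z0 => //; apply: setC_ball_subset.
Qed.
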